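(* Let $f\in\mathcal{H}^2_{\omega}$ and, for $k\geq1$ and $\lambda\in\mathbb{C}$, $g_{k,\lambda}(z)=z^k+\lambda$. Then $f$ is $\mathcal{H}^2_{\omega}$-inner if and only if for every integer $k\geq 1$ there exist constants $C_k,D_k$ such that $$D_k+|\lambda|^2\leq\|fg_{k,\lambda}\|^2\leq C_k+|\lambda|^2\quad\text{for all }\lambda\in\mathbb{C}.$$
   Context: Let $\omega=\{\omega_n\}_{n\geq 0}$ be a sequence of positive reals with $\omega_0=1$ and $\lim_{n\to\infty}\omega_{n+1}/\omega_n=1$. $\mathcal{H}^2_{\omega}$ is the Hilbert space of power series $f(z)=\sum_{n\ge0}a_nz^n$ with $\|f\|^2=\sum_{n\geq0}\omega_n|a_n|^2<\infty$ and inner product $\langle f,g\rangle=\sum_n\omega_na_n\overline{b_n}$ for $g=\sum b_nz^n$. A function $f\in\mathcal{H}^2_{\omega}$ is $\mathcal{H}^2_{\omega}$-inner if $\|f\|=1$ and $\langle z^mf,f\rangle=0$ for all integers $m\geq1$. *)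

From Stdlib Require Import Reals Lra Lia.
Open Scope R_scope.

Definition Cplx : Type := (R * R)%type.
Definition C0 : Cplx := (0, 0).
Definition C1 : Cplx := (1, 0).
Definition Cadd (z w : Cplx) : Cplx := (fst z + fst w, snd z + snd w).
Definition Cmul (z w : Cplx) : Cplx :=
  (fst z * fst w - snd z * snd w, fst z * snd w + snd z * fst w).
Definition Cconj (z : Cplx) : Cplx := (fst z, - snd z).
Definition Rscal (r : R) (z : Cplx) : Cplx := (r * fst z, r * snd z).
Definition Cnorm2 (z : Cplx) : R := fst z * fst z + snd z * snd z.

(* A (formal) power series sum_n a_n z^n is given by its coefficient sequence. *)
Definition pseries := nat -> Cplx.

Definition weight (w : nat -> R) : Prop :=
  (forall n, 0 < w n) /\ w 0%nat = 1 /\ Un_cv (fun n => w (S n) / w n) 1.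

Definition has_norm2 (w : nat -> R) (a : pseries) (l : R) : Prop :=
  infinite_sum (fun n => w n * Cnorm2 (a n)) l.

Definition in_H2 (w : nat -> R) (a : pseries) : Prop :=
  exists l, has_norm2 w a l.

Definition Cinfinite_sum (u : nat -> Cplx) (l : Cplx) : Prop :=
  infinite_sum (fun n => fst (u n)) (fst l) /\
  infinite_sum (fun n => snd (u n)) (snd l).

Definition has_inner (w : nat -> R) (a b : pseries) (l : Cplx) : Prop :=
  Cinfinite_sum (fun n => Rscal (w n) (Cmul (a n) (Cconj (b n)))) l.

(* coefficients of z^m f *)
Definition shiftz (m : nat) (a : pseries) : pseries :=
  fun n => if Nat.ltb n m then C0 else a (n - m)%nat.

Definition H2_inner (w : nat -> R) (a : pseries) : Prop :=
  has_norm2 w a 1 /\ forall m : nat, (1 <= m)%nat -> has_inner w (shiftz m a) a C0.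

Fixpoint Csum (u : nat -> Cplx) (n : nat) : Cplx :=
  match n with
  | O => u O
  | S p => Cadd (Csum u p) (u (S p))
  end.

Definition pmul (a b : pseries) : pseries :=
  fun n => Csum (fun i => Cmul (a i) (b (n - i)%nat)) n.

(* g_{k,lambda}(z) = z^k + lambda  (for k >= 1) *)
Definition g_poly (k : nat) (lam : Cplx) : pseries :=
  fun n => Cadd (if Nat.eqb n k then C1 else C0) (if Nat.eqb n 0 then lam else C0).

From Stdlib Require Import Reals Lra Lia.
Open Scope R_scope.

(* Coefficientwise, [||f g_{k,lam}||^2 = ||z^k f||^2 + |lam|^2 ||f||^2 + 2 Re (conj lam <z^k f, f>)],
   and [z^k f] lies in the space because the weight ratios are bounded.  For inner [f] this is
   [||z^k f||^2 + |lam|^2].  Conversely, the two-sided bound says that the quadratic polynomial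
   [(||f||^2 - 1) |lam|^2 + 2 Re (conj lam <z^k f, f>)] in [lam] is bounded, which forces
   [||f|| = 1] and [<z^k f, f> = 0]. *)

Lemma Un_cv_const (c : R) : Un_cv (fun _ => c) c.
Proof.
  intros e He; exists 0%nat; intros n _.
  unfold R_dist; rewrite Rminus_diag, Rabs_R0; exact He.
Qed.

Lemma infinite_sum_ext (u v : nat -> R) (l : R) :
  (forall n, u n = v n) -> infinite_sum u l -> infinite_sum v l.
Proof.
  intros Euv Hu; apply (Un_cv_ext (sum_f_R0 u)); [|exact Hu].
  intros n; apply sum_eq; auto.
Qed.

Lemma infinite_sum_plus_scal (u v : nat -> R) (a b c : R) :
  infinite_sum u a -> infinite_sum v b ->
  infinite_sum (fun n => u n + c * v n) (a + c * b).
Proof.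
  intros Hu Hv.
  apply (Un_cv_ext (fun n => sum_f_R0 u n + c * sum_f_R0 v n)).
  - intros n; rewrite sum_plus, scal_sum; f_equal; apply sum_eq; intros; ring.
  - apply CV_plus; [exact Hu|]. apply CV_mult; [apply Un_cv_const | exact Hv].
Qed.

Lemma infinite_sum_scal (u : nat -> R) (a c : R) :
  infinite_sum u a -> infinite_sum (fun n => c * u n) (c * a).
Proof.
  intros Hu; apply (Un_cv_ext (fun n => c * sum_f_R0 u n)).
  - intros n; rewrite scal_sum; apply sum_eq; intros; ring.
  - apply CV_mult; [apply Un_cv_const | exact Hu].
Qed.

Lemma infinite_sum_of_bounded_partial_sums (u : nat -> R) (M : R) :
  (forall n, 0 <= u n) -> (forall n, sum_f_R0 u n <= M) ->
  exists l, infinite_sum u l.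
Proof.
  intros Hu HM.
  assert (Hgrow : Un_growing (sum_f_R0 u)).
  { intros n; simpl; specialize (Hu (S n)); lra. }
  destruct (growing_cv _ Hgrow) as [l Hl].
  - exists M; intros x [n ->]; apply HM.
  - exists l; exact Hl.
Qed.

Lemma Cnorm2_ge0 (z : Cplx) : 0 <= Cnorm2 z.
Proof. unfold Cnorm2; nra. Qed.

Lemma Cnorm2_C0 : Cnorm2 C0 = 0.
Proof. unfold Cnorm2, C0; simpl; ring. Qed.

Lemma Cnorm2_Cadd_Cmul (u v lam : Cplx) :
  Cnorm2 (Cadd u (Cmul v lam)) =
  Cnorm2 u + Cnorm2 lam * Cnorm2 v
  + 2 * (fst lam * fst (Cmul u (Cconj v)) + snd lam * snd (Cmul u (Cconj v))).
Proof.
  destruct u, v, lam; unfold Cnorm2, Cadd, Cmul, Cconj; simpl; ring.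
Qed.

Lemma Csum_ext (u v : nat -> Cplx) (n : nat) :
  (forall i, (i <= n)%nat -> u i = v i) -> Csum u n = Csum v n.
Proof.
  induction n as [|n IHn]; intros Euv; simpl.
  - apply Euv; lia.
  - rewrite IHn by (intros; apply Euv; lia).
    rewrite (Euv (S n)) by lia; reflexivity.
Qed.

Lemma Csum_Cadd (u v : nat -> Cplx) (n : nat) :
  Csum (fun i => Cadd (u i) (v i)) n = Cadd (Csum u n) (Csum v n).
Proof.
  induction n as [|n IHn]; simpl; [reflexivity|].
  rewrite IHn; destruct (Csum u n), (Csum v n), (u (S n)), (v (S n)).
  unfold Cadd; simpl; f_equal; ring.
Qed.

Lemma Csum_delta (c : Cplx) (m n : nat) :
  Csum (fun i => if Nat.eqb i m then c else C0) n = if Nat.leb m n then c else C0.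
Proof.
  induction n as [|n IHn]; cbn [Csum].
  - destruct m; reflexivity.
  - rewrite IHn.
    destruct (Nat.eqb_spec (S n) m), (Nat.leb_spec m n), (Nat.leb_spec m (S n));
      try lia; destruct c; unfold Cadd, C0; simpl; f_equal; ring.
Qed.

Lemma Csum_select (u : nat -> Cplx) (j n : nat) :
  Csum (fun i => if Nat.eqb (n - i) j then u i else C0) n =
  if Nat.leb j n then u (n - j)%nat else C0.
Proof.
  rewrite (Csum_ext _ (fun i => if Nat.eqb i (n - j) then
                                  (if Nat.leb j n then u (n - j)%nat else C0) else C0)).
  - rewrite Csum_delta; destruct (Nat.leb_spec (n - j) n); [reflexivity | lia].
  - intros i Hi.
    destruct (Nat.eqb_spec (n - i) j), (Nat.eqb_spec i (n - j)), (Nat.leb_spec j n);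
      try lia; try reflexivity; f_equal; lia.
Qed.

Lemma pmul_g_poly (a : pseries) (k : nat) (lam : Cplx) (n : nat) :
  pmul a (g_poly k lam) n = Cadd (shiftz k a n) (Cmul (a n) lam).
Proof.
  unfold pmul.
  rewrite (Csum_ext _ (fun i => Cadd (if Nat.eqb (n - i) k then a i else C0)
                                     (if Nat.eqb (n - i) 0 then Cmul (a i) lam else C0))).
  - rewrite Csum_Cadd, !Csum_select, Nat.sub_0_r; unfold shiftz.
    destruct (Nat.leb_spec k n), (Nat.ltb_spec n k); try lia; reflexivity.
  - intros i _; unfold g_poly.
    destruct (Nat.eqb (n - i) k), (Nat.eqb (n - i) 0), (a i), lam;
      unfold Cmul, Cadd, C0, C1; simpl; f_equal; ring.
Qed.

Section NormOfProduct.
Variables (w : nat -> R) (a : pseries) (k : nat).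

Let inner_term (n : nat) : Cplx := Rscal (w n) (Cmul (shiftz k a n) (Cconj (a n))).

Lemma norm2_term_pmul_g_poly (lam : Cplx) (n : nat) :
  w n * Cnorm2 (pmul a (g_poly k lam) n) =
  w n * Cnorm2 (shiftz k a n) + Cnorm2 lam * (w n * Cnorm2 (a n))
  + 2 * (fst lam * fst (inner_term n) + snd lam * snd (inner_term n)).
Proof. rewrite pmul_g_poly, Cnorm2_Cadd_Cmul; unfold inner_term, Rscal; simpl; ring. Qed.

Lemma has_norm2_pmul_g_poly (lam : Cplx) (S N r i : R) :
  has_norm2 w (shiftz k a) S -> has_norm2 w a N -> has_inner w (shiftz k a) a (r, i) ->
  has_norm2 w (pmul a (g_poly k lam)) (S + Cnorm2 lam * N + 2 * (fst lam * r + snd lam * i)).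
Proof.
  intros HS HN [Hr Hi]; simpl in Hr, Hi.
  pose proof (infinite_sum_plus_scal _ _ _ _ (2 * snd lam)
    (infinite_sum_plus_scal _ _ _ _ (2 * fst lam)
      (infinite_sum_plus_scal _ _ _ _ (Cnorm2 lam) HS HN) Hr) Hi) as H.
  replace (S + Cnorm2 lam * N + 2 * (fst lam * r + snd lam * i))
    with (S + Cnorm2 lam * N + 2 * fst lam * r + 2 * snd lam * i) by ring.
  revert H; apply infinite_sum_ext; intros n.
  rewrite norm2_term_pmul_g_poly; unfold inner_term, Rscal; simpl; ring.
Qed.

Lemma has_norm2_shiftz_of_g_poly_C0 (l0 : R) :
  has_norm2 w (pmul a (g_poly k C0)) l0 -> has_norm2 w (shiftz k a) l0.
Proof.
  apply infinite_sum_ext; intros n.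
  rewrite norm2_term_pmul_g_poly, Cnorm2_C0; unfold C0; simpl; ring.
Qed.

Lemma has_inner_shiftz_polarization (S N l1 l2 : R) :
  has_norm2 w (shiftz k a) S -> has_norm2 w a N ->
  has_norm2 w (pmul a (g_poly k (1, 0))) l1 -> has_norm2 w (pmul a (g_poly k (0, 1))) l2 ->
  has_inner w (shiftz k a) a ((l1 - S - N) / 2, (l2 - S - N) / 2).
Proof.
  intros HS HN H1 H2; split; simpl.
  - pose proof (infinite_sum_scal _ _ (/ 2)
      (infinite_sum_plus_scal _ _ _ _ (-1) (infinite_sum_plus_scal _ _ _ _ (-1) H1 HS) HN)) as H.
    replace ((l1 - S - N) / 2) with (/ 2 * (l1 + -1 * S + -1 * N)) by (unfold Rdiv; ring).
    revert H; apply infinite_sum_ext; intros n.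
    rewrite norm2_term_pmul_g_poly; unfold inner_term, Cnorm2; simpl; field.
  - pose proof (infinite_sum_scal _ _ (/ 2)
      (infinite_sum_plus_scal _ _ _ _ (-1) (infinite_sum_plus_scal _ _ _ _ (-1) H2 HS) HN)) as H.
    replace ((l2 - S - N) / 2) with (/ 2 * (l2 + -1 * S + -1 * N)) by (unfold Rdiv; ring).
    revert H; apply infinite_sum_ext; intros n.
    rewrite norm2_term_pmul_g_poly; unfold inner_term, Cnorm2; simpl; field.
Qed.

End NormOfProduct.

Lemma weight_ratio_bounded (w : nat -> R) :
  weight w -> exists K, 0 <= K /\ forall n, w (S n) <= K * w n.
Proof.
  intros [Hpos [_ Hratio]].
  destruct (maj_by_pos _ (exist _ 1 Hratio)) as [K [HK Hbound]].
  exists K; split; [lra|]; intros n.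
  assert (Ew : w (S n) = w (S n) / w n * w n) by (field; specialize (Hpos n); lra).
  rewrite Ew; apply Rmult_le_compat_r; [specialize (Hpos n); lra|].
  exact (Rle_trans _ _ _ (Rle_abs _) (Hbound n)).
Qed.

Lemma shiftz_0 (a : pseries) (n : nat) : shiftz 0 a n = a n.
Proof. unfold shiftz; simpl; rewrite Nat.sub_0_r; reflexivity. Qed.

Lemma shiftz_S_0 (a : pseries) (k : nat) : shiftz (S k) a 0%nat = C0.
Proof. reflexivity. Qed.

Lemma shiftz_S_S (a : pseries) (k n : nat) : shiftz (S k) a (S n) = shiftz k a n.
Proof. reflexivity. Qed.

Lemma shiftz_partial_sum_le (w : nat -> R) (K : R) (a : pseries) (k N : nat) :
  (forall n, 0 <= w n) -> 0 <= K -> (forall n, w (S n) <= K * w n) ->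
  sum_f_R0 (fun n => w n * Cnorm2 (shiftz k a n)) N
  <= K ^ k * sum_f_R0 (fun n => w n * Cnorm2 (a n)) N.
Proof.
  intros Hw HK Hratio.
  assert (Hterm : forall n, 0 <= w n * Cnorm2 (a n)).
  { intros n; apply Rmult_le_pos; [apply Hw | apply Cnorm2_ge0]. }
  assert (HKk : forall k, 0 <= K ^ k) by (intros; apply pow_le; exact HK).
  revert N; induction k as [|k IHk]; intros N.
  - rewrite pow_O, Rmult_1_l; right; apply sum_eq; intros n _; rewrite shiftz_0; reflexivity.
  - destruct N as [|N].
    + cbn [sum_f_R0]; rewrite shiftz_S_0, Cnorm2_C0, Rmult_0_r.
      apply Rmult_le_pos; [apply HKk | apply Hterm].
    + rewrite decomp_sum by lia; simpl Init.Nat.pred.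
      rewrite shiftz_S_0, Cnorm2_C0, Rmult_0_r, Rplus_0_l.
      apply Rle_trans with (K * sum_f_R0 (fun n => w n * Cnorm2 (shiftz k a n)) N).
      * (* shifting by one more costs at most a factor [K] at every index *)
        rewrite scal_sum; apply sum_Rle; intros n _.
        rewrite shiftz_S_S, (Rmult_comm _ K), <- Rmult_assoc.
        apply Rmult_le_compat_r; [apply Cnorm2_ge0 | apply Hratio].
      * rewrite <- tech_pow_Rmult, Rmult_assoc; apply Rmult_le_compat_l; [exact HK|].
        eapply Rle_trans; [apply IHk|].
        apply Rmult_le_compat_l; [apply HKk|].
        cbn [sum_f_R0]; specialize (Hterm (S N)); lra.
Qed.

Lemma in_H2_shiftz (w : nat -> R) (a : pseries) (k : nat) :
  weight w -> in_H2 w a -> in_H2 w (shiftz k a).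
Proof.
  intros Hw [l Ha].
  destruct (weight_ratio_bounded w Hw) as [K [HK Hratio]].
  assert (Hpos : forall n, 0 <= w n) by (intros n; destruct Hw as [Hp _]; left; apply Hp).
  apply (infinite_sum_of_bounded_partial_sums _ (K ^ k * l)).
  - intros n; apply Rmult_le_pos; [apply Hpos | apply Cnorm2_ge0].
  - intros N; eapply Rle_trans; [apply shiftz_partial_sum_le; eauto|].
    apply Rmult_le_compat_l; [apply pow_le; exact HK|].
    apply sum_incr; [exact Ha|].
    intros n; apply Rmult_le_pos; [apply Hpos | apply Cnorm2_ge0].
Qed.

Lemma Rabs_le_between (x M : R) : Rabs x <= M -> - M <= x <= M.
Proof.
  intros Hx; pose proof (Rle_abs x); pose proof (Rle_abs (- x)).
  rewrite Rabs_Ropp in *; lra.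
Qed.

Lemma bounded_quadratic_eq0 (a b M : R) :
  (forall t, Rabs (a * t * t + b * t) <= M) -> a = 0 /\ b = 0.
Proof.
  intros Hbd.
  assert (HM : 0 <= M) by (specialize (Hbd 0); eapply Rle_trans; [apply Rabs_pos | exact Hbd]).
  (* the even and odd parts [a t^2] and [b t] are bounded by [M] as well *)
  assert (Hsplit : forall t, Rabs (a * t * t) <= M /\ Rabs (b * t) <= M).
  { intros t; pose proof (Hbd t) as Hp; pose proof (Hbd (- t)) as Hm.
    apply Rabs_le_between in Hp, Hm; split; apply Rabs_le; nra. }
  assert (Hlin : forall c, (forall t, 1 <= t -> Rabs (c * t) <= M) -> c = 0).
  { intros c Hc; destruct (Req_dec c 0) as [|Hc0]; [assumption | exfalso].
    assert (Hpos : 0 < Rabs c) by (apply Rabs_pos_lt; exact Hc0).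
    assert (Hq : 0 <= M / Rabs c).
    { apply Rmult_le_pos; [lra | left; apply Rinv_0_lt_compat; lra]. }
    specialize (Hc (1 + M / Rabs c) ltac:(lra)).
    rewrite Rabs_mult, (Rabs_right (1 + M / Rabs c)) in Hc by lra.
    assert (E : Rabs c * (1 + M / Rabs c) = Rabs c + M) by (field; lra).
    lra. }
  split; apply Hlin; intros t Ht.
  - (* for [t >= 1], [|a t| <= |a t^2|] *)
    eapply Rle_trans; [| exact (proj1 (Hsplit t))].
    rewrite (Rabs_mult (a * t) t), (Rabs_right t) by lra.
    pose proof (Rabs_pos (a * t)); nra.
  - exact (proj2 (Hsplit t)).
Qed.

Lemma unit_norm_orthogonal_of_g_poly_bounds (w : nat -> R) (a : pseries) (k : nat) (N C D : R) :
  has_norm2 w a N ->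
  (forall lam : Cplx, exists l, has_norm2 w (pmul a (g_poly k lam)) l /\
     D + Cnorm2 lam <= l /\ l <= C + Cnorm2 lam) ->
  N = 1 /\ has_inner w (shiftz k a) a C0.
Proof.
  intros HN Hb.
  destruct (Hb C0) as [S [H0 _]].
  destruct (Hb (1, 0)) as [l1 [H1 _]].
  destruct (Hb (0, 1)) as [l2 [H2 _]].
  pose proof (has_norm2_shiftz_of_g_poly_C0 w a k S H0) as HS.
  pose proof (has_inner_shiftz_polarization w a k S N l1 l2 HS HN H1 H2) as Hinner.
  set (r := (l1 - S - N) / 2) in Hinner; set (i := (l2 - S - N) / 2) in Hinner.
  assert (Hbd : forall p q,
    D - S <= (N - 1) * (p * p + q * q) + 2 * (p * r + q * i) <= C - S).
  { intros p q; destruct (Hb (p, q)) as [l [Hl [HD HC]]].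
    pose proof (has_norm2_pmul_g_poly w a k (p, q) S N r i HS HN Hinner) as Hl'.
    rewrite (uniqueness_sum _ _ _ Hl Hl') in HD, HC.
    unfold Cnorm2 in HD, HC; simpl in HD, HC; lra. }
  set (M := Rabs (C - S) + Rabs (D - S)).
  assert (HM : forall x, D - S <= x <= C - S -> Rabs x <= M).
  { intros x Hx; pose proof (Rle_abs (C - S)); pose proof (Rle_abs (- (D - S))).
    pose proof (Rabs_pos (C - S)); pose proof (Rabs_pos (D - S)).
    rewrite Rabs_Ropp in *; apply Rabs_le; unfold M; lra. }
  destruct (bounded_quadratic_eq0 (N - 1) (2 * r) M) as [HN1 Hr].
  { intros t; apply HM; specialize (Hbd t 0).
    replace ((N - 1) * t * t + 2 * r * t)
      with ((N - 1) * (t * t + 0 * 0) + 2 * (t * r + 0 * i)) by ring; exact Hbd. }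
  destruct (bounded_quadratic_eq0 (N - 1) (2 * i) M) as [_ Hi].
  { intros t; apply HM; specialize (Hbd 0 t).
    replace ((N - 1) * t * t + 2 * i * t)
      with ((N - 1) * (0 * 0 + t * t) + 2 * (0 * r + t * i)) by ring; exact Hbd. }
  split; [lra|].
  replace r with 0 in Hinner by lra; replace i with 0 in Hinner by lra.
  exact Hinner.
Qed.

Theorem mainTheorem3 (w : nat -> R) (f : pseries) :
  weight w -> in_H2 w f ->
  (H2_inner w f <->
   forall k : nat, (1 <= k)%nat ->
     exists Ck Dk : R, forall lam : Cplx,
       exists l : R, has_norm2 w (pmul f (g_poly k lam)) l /\
         Dk + Cnorm2 lam <= l /\ l <= Ck + Cnorm2 lam).
Proof.
  intros Hw [N Hf]; split.
  - intros [Hnorm Horth] k Hk.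
    destruct (in_H2_shiftz w f k Hw (ex_intro _ N Hf)) as [S HS].
    exists S, S; intros lam.
    exists (S + Cnorm2 lam * 1 + 2 * (fst lam * 0 + snd lam * 0)); split.
    + exact (has_norm2_pmul_g_poly w f k lam S 1 0 0 HS Hnorm (Horth k Hk)).
    + lra.
  - intros Hb; split.
    + destruct (Hb 1%nat (le_n 1)) as [C [D H1]].
      destruct (unit_norm_orthogonal_of_g_poly_bounds w f 1 N C D Hf H1) as [-> _].
      exact Hf.
    + intros m Hm; destruct (Hb m Hm) as [C [D Hbm]].
      exact (proj2 (unit_norm_orthogonal_of_g_poly_bounds w f m N C D Hf Hbm)).
Qed.
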